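(* Let $f$ be a real Laurent polynomial whose signed support $(\mathcal A_+,\mathcal A_-)$ is full dimensional and nonseparable. If $x_*\in\operatorname{Sing}_{>0}(f)$, then $\det(\operatorname{Hess}(f)(x_* ))>0$.
   Context: A real Laurent polynomial $f(x)=\sum_{a\in\mathcal A_+}c_ax^a-\sum_{b\in\mathcal A_-}c_bx^b$ with disjoint finite $\mathcal A_+,\mathcal A_-\subseteq\mathbb Z^n$ and all $c_a,c_b>0$ has signed support $(\mathcal A_+,\mathcal A_-)$; it is full dimensional if $\dim\operatorname{conv}(\mathcal A_+\cup\mathcal A_-)=n$. $\mathcal F(\mathcal A_+)$ is the common refinement of all regular polyhedral subdivisions of $\mathcal A_+$, $\mathcal F_n(\mathcal A_+)$ its $n$-cells; $(\mathcal A_+,\mathcal A_-)$ is nonseparable if $\mathcal A_-\subseteq\operatorname{relint}\operatorname{conv}(\mathcal A_+)$ and some $D\in\mathcal F_n(\mathcal A_+)$ contains $\mathcal A_-$. $\operatorname{Sing}_{>0}(f)$ is the set of $x\in\mathbb R^n_{>0}$ with $f(x)=x_1\partial_{x_1}f(x)=\dots=x_n\partial_{x_n}f(x)=0$. $\operatorname{Hess}(f)$ is the Hessian matrix of second partial derivatives. *)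

From HB Require Import structures.
From mathcomp Require Import all_boot all_order all_algebra.
From mathcomp Require Import all_classical all_reals all_analysis.
Set Implicit Arguments. Unset Strict Implicit. Unset Printing Implicit Defensive.
Import Order.TTheory GRing.Theory Num.Theory.
Local Open Scope classical_set_scope.
Local Open Scope ring_scope.

Section Defs.
Variables (R : realType) (n : nat).

Definition monom (a : 'rV[int]_n) (x : 'rV[R]_n) : R :=
  \prod_(i < n) (x 0 i) ^ (a 0 i).

Definition laurent (s : seq 'rV[int]_n) (c : 'rV[int]_n -> R) (x : 'rV[R]_n) : R :=
  \sum_(a <- s) c a * monom a x.

Definition Aplus (s : seq 'rV[int]_n) (c : 'rV[int]_n -> R) : seq 'rV[int]_n :=
  [seq a <- s | 0 < c a].
Definition Aminus (s : seq 'rV[int]_n) (c : 'rV[int]_n -> R) : seq 'rV[int]_n :=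
  [seq a <- s | c a < 0].

Definition ri (a : 'rV[int]_n) : 'rV[R]_n := map_mx (fun z : int => z%:~R) a.

Definition upd (x : 'rV[R]_n) (i : 'I_n) (t : R) : 'rV[R]_n :=
  \row_k (if k == i then t else x 0 k).

Definition partial (i : 'I_n) (F : 'rV[R]_n -> R) (x : 'rV[R]_n) : R :=
  derive1 (fun t => F (upd x i t)) (x 0 i).

Definition Hess (F : 'rV[R]_n -> R) (x : 'rV[R]_n) : 'M[R]_n :=
  \matrix_(i < n, j < n) partial i (partial j F) x.

Definition SingPos (F : 'rV[R]_n -> R) : set 'rV[R]_n :=
  [set x : 'rV[R]_n | (forall i, 0 < x 0 i) /\ F x = 0 /\
           (forall i, x 0 i * partial i F x = 0)].

Definition conv (A : seq 'rV[R]_n) : set 'rV[R]_n :=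
  [set p : 'rV[R]_n | exists l : 'I_(size A) -> R,
     (forall k, 0 <= l k) /\ \sum_k l k = 1 /\ p = \sum_k l k *: A`_k].

Definition aff (A : seq 'rV[R]_n) : set 'rV[R]_n :=
  [set p : 'rV[R]_n | exists l : 'I_(size A) -> R,
     \sum_k l k = 1 /\ p = \sum_k l k *: A`_k].

Definition relint_conv (A : seq 'rV[R]_n) : set 'rV[R]_n :=
  [set p : 'rV[R]_n | conv A p /\ exists2 e : R, 0 < e &
     forall q, aff A q -> (forall i, `|q 0 i - p 0 i| < e) -> conv A q].

(* dim S = n : S contains affinely spanning points, i.e. points whose
   differences span R^n *)
Definition full_dim (S : set 'rV[R]_n) : Prop :=
  exists s : seq 'rV[R]_n, (0 < size s)%N /\ (forall p, p \in s -> S p) /\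
    \rank (\matrix_(k < size s, j < n) (s`_k - s`_0) 0 j) = n.

(* P is a cell (as a polytope) of the regular subdivision of A induced by the
   height function h: conv of the points of A whose lifts lie on a lower
   face of conv{(a, h a)}, the lower face being cut out by the graph of an
   affine function lying below all lifted points. *)
Definition reg_cell (A : seq 'rV[R]_n) (h : 'rV[R]_n -> R) (P : set 'rV[R]_n) : Prop :=
  exists (w : 'rV[R]_n) (d : R),
    (forall a, a \in A -> \sum_(i < n) w 0 i * a 0 i + d <= h a) /\
    P = conv [seq a : 'rV[R]_n <- A | \sum_(i < n) w 0 i * a 0 i + d == h a].

(* D is an n-cell of the common refinement F(A) of all regular polyhedral
   subdivisions of A: an intersection of one cell from each regular
   subdivision, of dimension n. *)
Definition refinement_ncell (A : seq 'rV[R]_n) (D : set 'rV[R]_n) : Prop :=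
  full_dim D /\
  exists g : ('rV[R]_n -> R) -> set 'rV[R]_n,
    (forall h, reg_cell A h (g h)) /\ D = [set p : 'rV[R]_n | forall h, g h p].

Definition nonseparable (Ap Am : seq 'rV[int]_n) : Prop :=
  (forall b, b \in Am -> relint_conv (map ri Ap) (ri b)) /\
  exists D, refinement_ncell (map ri Ap) D /\ (forall b, b \in Am -> D (ri b)).

Definition full_dimensional (Ap Am : seq 'rV[int]_n) : Prop :=
  full_dim (conv (map ri (Ap ++ Am))).

End Defs.

From Pilot Require Import Defs.
From HB Require Import structures.
From mathcomp Require Import all_boot all_order all_algebra.
From mathcomp Require Import all_classical all_reals all_analysis.
From mathcomp Require Import ring lra.
Set Implicit Arguments. Unset Strict Implicit. Unset Printing Implicit Defensive.
Import Order.TTheory GRing.Theory Num.Theory.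
Import numFieldNormedType.Exports.
Local Open Scope classical_set_scope.
Local Open Scope ring_scope.

(* At a positive singular point x, the Euler relations x_i (d_i f)(x) = 0 turn the Hessian
   into D M D with D = diag(1/x_i) and M = sum_a c_a x^a a^T a, so it suffices that the
   form Q(v) = sum_a c_a x^a <v,a>^2 is positive definite: a positive definite matrix
   has positive determinant, since det((1-t) I + t A) has no root on [0,1].
   The weights c_a x^a and their first moments sum to zero, hence Q(v) equals
   sum_a c_a x^a (h - l)(a) for h = <v,.>^2 and any affine l.  Choosing l from the cell
   of the regular subdivision of A_+ induced by h that contains the nonseparating cell D
   gives l <= h on A_+, and h <= l on A_- by convexity of h, so Q(v) >= 0.  If Q(v) = 0
   then h = l on A_+ and at some b in A_-; as b lies in the relative interior of
   conv A_+, convexity of h forces <v,.> to be constant on aff A_+, and full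
   dimensionality gives v = 0. *)

Section LaurentCalculus.
Variables (R : realType) (n : nat).
Implicit Types (s : seq 'rV[int]_n) (c : 'rV[int]_n -> R) (x : 'rV[R]_n).

Let scaleRE (a b : R) : a *: b = a * b. Proof. by []. Qed.

Lemma is_derive_exprz (z : int) (t : R) : t != 0 ->
  is_derive t 1 (fun u : R => u ^ z) (z%:~R * t ^ z / t).
Proof.
move=> t0; case: z => [k|k].
- have -> : (fun u : R => u ^ (Posz k)) = (@id R) ^+ k.
    by apply/funext => u; rewrite /= exprfctE.
  apply: is_derive_eq.
  case: k => [|k]; first by rewrite !expr0 /= mul0r mul0r scale0r.
  by rewrite scaleRE mulr1 pmulrn -!exprnP exprSr mulrA mulfK.
- have -> : (fun u : R => u ^ Negz k) = (fun u => (((@id R) ^+ k.+1) u)^-1).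
    by apply/funext => u; rewrite NegzE exprfctE /= exprnN.
  apply: is_derive_eq.
    apply: (@is_deriveV _ ((@id R) ^+ k.+1)); first by rewrite exprfctE expf_neq0.
  rewrite exprfctE /= !scaleRE mulr1 NegzE -exprnN mulrNz -pmulrn.
  have -> : t ^+ k.+1 = t ^+ k * t by rewrite exprSr.
  move: (t ^+ k) (expf_neq0 k t0) => u u0.
  by field; rewrite u0 t0.
Qed.

Lemma upd_id x i : upd x i (x 0 i) = x.
Proof. by apply/rowP => k; rewrite mxE; case: eqP => // ->. Qed.

Lemma upd_neq x i j t : j != i -> upd x i t 0 j = x 0 j.
Proof. by move=> /negbTE ji; rewrite mxE ji. Qed.

Lemma monom_upd a x i t :
  monom a (upd x i t) = \prod_(k < n | k != i) x 0 k ^ a 0 k * t ^ a 0 i.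
Proof.
rewrite /monom (bigD1 i) //= mxE eqxx mulrC; congr (_ * _).
by apply: eq_bigr => k ki; rewrite upd_neq.
Qed.

Lemma is_derive_monom a x i : x 0 i != 0 ->
  is_derive (x 0 i) 1 (fun t => monom a (upd x i t)) ((a 0 i)%:~R * monom a x / x 0 i).
Proof.
move=> xi0; have -> : (fun t => monom a (upd x i t)) =
    (\prod_(k < n | k != i) x 0 k ^ a 0 k) *: (fun t : R => t ^ a 0 i).
  by apply/funext => t; rewrite monom_upd.
apply: is_derive_eq; first by apply: is_deriveZ; exact: is_derive_exprz.
have -> : monom a x = \prod_(k < n | k != i) x 0 k ^ a 0 k * x 0 i ^ a 0 i.
  by rewrite -{1}(upd_id x i) monom_upd.
by rewrite scaleRE; ring.
Qed.

Lemma is_derive_laurent s c x i : x 0 i != 0 ->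
  is_derive (x 0 i) 1 (fun t => laurent s c (upd x i t))
    (laurent s (fun a => c a * (a 0 i)%:~R) x / x 0 i).
Proof.
move=> xi0; rewrite /laurent mulr_suml.
elim: s => [|a s IH].
  rewrite big_nil; have -> : (fun t => \sum_(a <- [::]) c a * monom a (upd x i t)) = cst 0.
    by apply/funext => t; rewrite big_nil.
  exact: is_derive_cst.
have -> : (fun t => \sum_(b <- a :: s) c b * monom b (upd x i t)) =
    c a *: (fun t => monom a (upd x i t)) + (fun t => \sum_(b <- s) c b * monom b (upd x i t)).
  by apply/funext => t; rewrite big_cons.
apply: is_derive_eq; first exact: (is_deriveD (is_deriveZ _ (is_derive_monom a xi0)) IH).
by rewrite big_cons scaleRE mulrA mulrA.
Qed.

Lemma partial_laurent s c x i : x 0 i != 0 ->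
  partial i (laurent s c) x = laurent s (fun a => c a * (a 0 i)%:~R) x / x 0 i.
Proof. by move=> xi0; rewrite /partial derive1E; apply: derive_val; exact: is_derive_laurent. Qed.

Lemma Hess_laurent s c x i j : (forall k, x 0 k != 0) ->
  Hess (laurent s c) x i j =
    (laurent s (fun a => c a * (a 0 i)%:~R * (a 0 j)%:~R) x
     - (i == j)%:R * laurent s (fun a => c a * (a 0 i)%:~R) x) / (x 0 i * x 0 j).
Proof.
move=> x0; rewrite /Hess mxE [partial i _ _]/partial derive1E.
have [<-|ij] := eqVneq i j.
- set G := (fun t => laurent s (fun a => c a * (a 0 i)%:~R) (upd x i t)) * (fun t : R => t^-1).
  have G_near : \forall t \near x 0 i, G t = partial i (laurent s c) (upd x i t).
    near=> t.
    have t0 : t != 0 by near: t; exact: (@cvgr_neq0 _ R^o _ _ _ id _ cvg_id (x0 i)).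
    by rewrite partial_laurent mxE eqxx.
  have G_derive := is_deriveM (is_derive_laurent s (fun a => c a * (a 0 i)%:~R) (x0 i))
                              (is_deriveV (x0 i) (is_derive_id (x 0 i) 1)).
  rewrite -(near_eq_derive _ G_near) derive_val upd_id !scaleRE mulr1 mul1r.
  by field; rewrite x0.
- have -> : (fun t => partial j (laurent s c) (upd x i t)) =
      (x 0 j)^-1 *: (fun t => laurent s (fun a => c a * (a 0 j)%:~R) (upd x i t)).
    apply/funext => t; rewrite partial_laurent; last by rewrite upd_neq // eq_sym.
    by rewrite upd_neq 1?eq_sym // mulrC.
  have Z_derive :=
    is_deriveZ (x 0 j)^-1 (is_derive_laurent s (fun a => c a * (a 0 j)%:~R) (x0 i)).
  rewrite derive_val mul0r subr0 scaleRE /laurent !mulr_suml mulr_sumr.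
  by apply: eq_bigr => a _; field; rewrite !x0.
Unshelve. all: by end_near.
Qed.

End LaurentCalculus.

Section Dot.
Variables (R : realFieldType) (n : nat).
Implicit Types u p q : 'rV[R]_n.

Definition dot u p : R := \sum_(i < n) u 0 i * p 0 i.

Lemma dotC u p : dot u p = dot p u.
Proof. by apply: eq_bigr => i _; rewrite mulrC. Qed.

Lemma dotD u p q : dot u (p + q) = dot u p + dot u q.
Proof. by rewrite /dot -big_split; apply: eq_bigr => i _; rewrite mxE mulrDr. Qed.

Lemma dotZ u t p : dot u (t *: p) = t * dot u p.
Proof. by rewrite /dot mulr_sumr; apply: eq_bigr => i _; rewrite mxE mulrCA. Qed.

Lemma dot_sum u m (l : 'I_m -> R) (P : 'I_m -> 'rV[R]_n) :
  dot u (\sum_(k < m) l k *: P k) = \sum_(k < m) l k * dot u (P k).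
Proof.
elim/big_rec2: _ => [|k _ y _ <-]; last by rewrite dotD dotZ.
by rewrite /dot big1 // => i _; rewrite mxE mulr0.
Qed.

Lemma dot_mulmx_tr u p : (u *m p^T) 0 0 = dot u p.
Proof. by rewrite mxE; apply: eq_bigr => i _; rewrite mxE. Qed.

Lemma quad_sum_outer (T : Type) (r : seq T) (W : T -> R) (p : T -> 'rV[R]_n) u :
  (u *m (\sum_(a <- r) W a *: ((p a)^T *m p a)) *m u^T) 0 0 =
  \sum_(a <- r) W a * dot u (p a) ^+ 2.
Proof.
rewrite mulmx_sumr mulmx_suml summxE; apply: eq_bigr => a _.
rewrite -scalemxAr -scalemxAl mxE !mulmxA -(mulmxA _ (p a)) mxE big_ord1.
by rewrite !dot_mulmx_tr [dot (p a) u]dotC expr2.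
Qed.

Lemma dot_self_gt0 u : u != 0 -> 0 < dot u u.
Proof.
move=> u0; have [i ui] : exists i, u 0 i != 0.
  apply/existsP; apply: contraR u0 => /existsPn u_eq0.
  by apply/eqP/rowP => k; rewrite mxE; apply/eqP; rewrite -[_ == _]negbK u_eq0.
rewrite /dot (bigD1 i) //= ltr_pwDl ?mulf_gt0 //; first by rewrite -expr2 exprn_even_gt0.
by apply: sumr_ge0 => k _; rewrite -expr2 sqr_ge0.
Qed.

Lemma dot_rows_eq0 m (M : 'M[R]_(m, n)) u :
  \rank M = n -> (forall k, dot u (row k M) = 0) -> u = 0.
Proof.
move=> rkM u_rows; have free_trM : row_free M^T by rewrite /row_free mxrank_tr rkM.
apply: (row_free_inj free_trM); rewrite mul0mx; apply/rowP => k.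
by rewrite !mxE -[RHS](u_rows k); apply: eq_bigr => j _; rewrite !mxE.
Qed.

Lemma sum_dot_affine_eq0 (T : Type) (r : seq T) (W : T -> R) (p : T -> 'rV[R]_n) w d :
  \sum_(a <- r) W a = 0 -> (forall i, \sum_(a <- r) W a * p a 0 i = 0) ->
  \sum_(a <- r) W a * (dot w (p a) + d) = 0.
Proof.
move=> W_sum0 W_mom0.
transitivity (\sum_(i < n) w 0 i * (\sum_(a <- r) W a * p a 0 i) + d * \sum_(a <- r) W a).
  under [in RHS]eq_bigr do rewrite mulr_sumr.
  rewrite exchange_big mulr_sumr -big_split /=.
  apply: eq_bigr => a _; rewrite mulrDr mulr_sumr [d * _]mulrC; congr (_ + _).
  by apply: eq_bigr => i _; rewrite mulrCA.
by rewrite W_sum0 mulr0 addr0 big1 // => i _; rewrite W_mom0 mulr0.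
Qed.

End Dot.

Section PositiveDefinite.
Variables (R : rcfType) (n : nat).

Definition posdefmx (A : 'M[R]_n) : Prop :=
  forall v : 'rV[R]_n, v != 0 -> 0 < (v *m A *m v^T) 0 0.

Lemma posdefmx1 : posdefmx 1%:M.
Proof. by move=> v v0; rewrite mulmx1 dot_mulmx_tr dot_self_gt0. Qed.

Lemma posdefmx_convex (A B : 'M[R]_n) t : posdefmx A -> posdefmx B -> 0 <= t <= 1 ->
  posdefmx ((1 - t) *: A + t *: B).
Proof.
move=> pdA pdB /andP[t0 t1] v v0.
rewrite mulmxDr mulmxDl -!scalemxAr -!scalemxAl.
have := pdA v v0; have := pdB v v0.
set qA := v *m A *m v^T; set qB := v *m B *m v^T; rewrite !mxE; nra.
Qed.

Lemma posdefmx_det_neq0 (A : 'M[R]_n) : posdefmx A -> \det A != 0.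
Proof.
move=> pdA; apply/negP => /det0P[w w0 wA].
by have := pdA w w0; rewrite wA mul0mx mxE ltxx.
Qed.

Lemma posdefmx_det_gt0 (A : 'M[R]_n) : posdefmx A -> 0 < \det A.
Proof.
move=> pdA.
pose P : {poly R} := \det (\matrix_(i, j) ((1 - 'X) * (i == j)%:R%:P + 'X * (A i j)%:P)).
have P_eval t : P.[t] = \det ((1 - t) *: 1%:M + t *: A).
  rewrite -horner_evalE -det_map_mx; congr (\det _); apply/matrixP => i j.
  by rewrite !mxE /= horner_evalE !hornerE.
have P_neq0 t : 0 <= t <= 1 -> P.[t] != 0.
  by move=> t01; rewrite P_eval posdefmx_det_neq0 //; apply: posdefmx_convex => //; exact: posdefmx1.
rewrite ltNge; apply/negP => detA_le0.
have [|t t01 /rootP] := @poly_ivt _ (- P) 0 1 ler01.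
  by rewrite !hornerN !P_eval subr0 subrr !scale0r !scale1r addr0 add0r det1
    oppr_le0 ler01 oppr_ge0.
by move/eqP; rewrite hornerN oppr_eq0; apply/negP; exact: P_neq0.
Qed.

Lemma posdefmx_diag_conj (d : 'rV[R]_n) (A : 'M[R]_n) :
  (forall i, d 0 i != 0) -> posdefmx A -> posdefmx (diag_mx d *m A *m diag_mx d).
Proof.
move=> d0 pdA v v0; rewrite -{2}(tr_diag_mx d) !mulmxA -mulmxA -trmx_mul.
apply: pdA; move: v0; apply: contra_neq => vd0; apply/rowP => i.
have /rowP/(_ i)/eqP := vd0; rewrite mul_mx_diag !mxE.
by rewrite mulf_eq0 (negbTE (d0 i)) orbF => /eqP.
Qed.

End PositiveDefinite.

Section ConvexGeometry.
Variables (R : realType) (n : nat).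
Implicit Types (A B E : seq 'rV[R]_n) (v w p q r : 'rV[R]_n).

Lemma convex_comb_sqr_le m (l t : 'I_m -> R) : (forall k, 0 <= l k) -> \sum_k l k = 1 ->
  (\sum_k l k * t k) ^+ 2 <= \sum_k l k * t k ^+ 2.
Proof.
move=> l_ge0 l_sum1; set M := \sum_k l k * t k.
have M_def : \sum_k l k * t k = M by []; clearbody M.
have var_ge0 : 0 <= \sum_k l k * (t k - M) ^+ 2.
  by apply: sumr_ge0 => k _; rewrite mulr_ge0 // sqr_ge0.
suff var_eq : \sum_k l k * (t k - M) ^+ 2 = \sum_k l k * t k ^+ 2 - M ^+ 2.
  by move: var_ge0; rewrite var_eq subr_ge0.
transitivity (\sum_k l k * t k ^+ 2 - 2 * M * (\sum_k l k * t k) + M ^+ 2 * \sum_k l k).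
  by rewrite !mulr_sumr -sumrB -big_split /=; apply: eq_bigr => k _; ring.
by rewrite l_sum1 M_def; ring.
Qed.

Lemma conv_sqr_dot_le v w d E p :
  (forall e, e \in E -> dot v e ^+ 2 <= dot w e + d) -> Defs.conv E p ->
  dot v p ^+ 2 <= dot w p + d.
Proof.
move=> E_le [l [l_ge0 [l_sum1 ->]]]; rewrite !dot_sum.
apply: le_trans (convex_comb_sqr_le _ l_ge0 l_sum1) _.
rewrite -[d]mul1r -l_sum1 mulr_suml -big_split /=.
apply: ler_sum => k _; rewrite -mulrDr ler_wpM2l //; apply: E_le; exact: mem_nth.
Qed.

Lemma mem_aff A e : e \in A -> aff A e.
Proof.
rewrite -index_mem => eA; exists (fun k => (k == Ordinal eA)%:R).
split; rewrite (bigD1 (Ordinal eA)) //= eqxx big1 => [|k /negbTE ->] //.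
- by rewrite addr0.
- by rewrite scale1r addr0 nth_index // -index_mem.
- by rewrite scale0r.
Qed.

Lemma aff_sum A (I : finType) (mu : I -> R) (P : I -> 'rV[R]_n) :
  \sum_i mu i = 1 -> (forall i, aff A (P i)) -> aff A (\sum_i mu i *: P i).
Proof.
move=> mu_sum1 /choice[L L_aff].
exists (fun k => \sum_i mu i * L i k); split.
  by rewrite exchange_big /= -mu_sum1; apply: eq_bigr => i _; rewrite -mulr_sumr (L_aff i).1 mulr1.
under eq_bigr => i _ do rewrite (L_aff i).2 scaler_sumr.
rewrite exchange_big /=; apply: eq_bigr => k _.
by rewrite scaler_suml; apply: eq_bigr => i _; rewrite scalerA.
Qed.

Lemma conv_sub_aff A B p : (forall e, e \in B -> aff A e) -> Defs.conv B p -> aff A p.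
Proof. by move=> B_aff [l [_ [l_sum1 ->]]]; apply: aff_sum => // k; apply: B_aff; exact: mem_nth. Qed.

Lemma aff_shift A p q r t : aff A p -> aff A q -> aff A r -> aff A (p + t *: (q - r)).
Proof.
move=> [l1 [s1 ->]] [l2 [s2 ->]] [l3 [s3 ->]].
exists (fun k => l1 k + t * (l2 k - l3 k)); split.
  by rewrite big_split /= -mulr_sumr sumrB s1 s2 s3 subrr mulr0 addr0.
rewrite -sumrB scaler_sumr -big_split /=; apply: eq_bigr => k _.
by rewrite scalerDl scalerBr !scalerA mulrBr scalerBl.
Qed.

Lemma relint_sqr_dot_flat v w d E b p q :
  (forall e, e \in E -> dot v e ^+ 2 <= dot w e + d) -> relint_conv E b ->
  dot v b ^+ 2 = dot w b + d -> aff E p -> aff E q -> dot v (p - q) = 0.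
Proof.
move=> E_le [b_conv [e e_gt0 b_ball]] b_eq p_aff q_aff.
have line_aff t : aff E (b + t *: (p - q)).
  by apply: aff_shift => //; apply: conv_sub_aff b_conv => ?; exact: mem_aff.
move: (p - q) line_aff => u line_aff.
pose U := \sum_(i < n) `|u 0 i|.
have U_ge0 : 0 <= U by apply: sumr_ge0.
pose eps := e / (1 + U).
have eps_gt0 : 0 < eps by rewrite divr_gt0 // ltr_pwDl.
have epsU : eps * (1 + U) = e by rewrite /eps mulfVK // gt_eqF // ltr_pwDl.
clearbody eps.
have step_conv t : `|t| = eps -> Defs.conv E (b + t *: u).
  move=> t_eps; apply: b_ball => // i.
  rewrite !mxE addrAC subrr add0r normrM t_eps.
  have ui_le : `|u 0 i| <= U by rewrite /U (bigD1 i) //= lerDl sumr_ge0.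
  by nra.
have normN_eps : `|- eps| = eps by rewrite normrN gtr0_norm.
(* Adding the inequalities at [b + eps u] and [b - eps u] cancels the first-order
   terms and leaves [eps^2 <v, u>^2 <= 0]. *)
have := conv_sqr_dot_le E_le (step_conv eps (gtr0_norm eps_gt0)).
have := conv_sqr_dot_le E_le (step_conv (- eps) normN_eps).
rewrite !dotD !dotZ => le_minus le_plus.
have : eps ^+ 2 * dot v u ^+ 2 <= 0 by nra.
rewrite pmulr_rle0 ?exprn_gt0 // => du_le0.
by apply/eqP; rewrite -sqrf_eq0 eq_le du_le0 sqr_ge0.
Qed.

End ConvexGeometry.

Section SignedSupport.
Variables (R : realType) (n : nat).
Implicit Types (s : seq 'rV[int]_n) (c X : 'rV[int]_n -> R).

Lemma weighted_gap_ge0 s c X (h l : 'rV[R]_n -> R) : (forall a, 0 < X a) ->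
  (forall a, a \in Aplus s c -> l (ri R a) <= h (ri R a)) ->
  (forall b, b \in Aminus s c -> h (ri R b) <= l (ri R b)) ->
  forall a, a \in s -> 0 <= c a * X a * (h (ri R a) - l (ri R a)).
Proof.
move=> X_gt0 Ap_le Am_le a aS.
have [c_gt0|c_lt0|<-] := ltrgtP 0 (c a); last by rewrite !mul0r.
- apply: mulr_ge0; first by rewrite mulr_ge0 ?ltW.
  by rewrite subr_ge0 Ap_le // mem_filter c_gt0.
- apply: mulr_le0; first by rewrite pmulr_lle0 ?ltW.
  by rewrite subr_le0 Am_le // mem_filter c_lt0.
Qed.

Lemma exists_Aminus s c X :
  full_dimensional R (Aplus s c) (Aminus s c) -> (forall a, 0 < X a) ->
  \sum_(a <- s) c a * X a = 0 -> exists b, b \in Aminus s c.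
Proof.
move=> [S [S_gt0 [S_conv _]]] X_gt0 sum0.
case Am_def: (Aminus s c) => [|b Am]; last by exists b; rewrite mem_head.
have cX_ge0 a : a \in s -> 0 <= c a * X a.
  move=> aS; rewrite pmulr_lge0 // leNgt; apply/negP => c_lt0.
  have : a \in Aminus s c by rewrite mem_filter c_lt0 aS.
  by rewrite Am_def.
have Ap_nil : Aplus s c = [::].
  rewrite /Aplus -(filter_pred0 s); apply: eq_in_filter => a aS; apply/negbTE.
  move: sum0 => /eqP; rewrite big_seq psumr_eq0 // => /allP/(_ a aS).
  by rewrite aS /= mulf_eq0 (gt_eqF (X_gt0 a)) orbF => /eqP->; rewrite ltxx.
have := S_conv _ (mem_nth 0 S_gt0); rewrite Ap_nil Am_def => -[l [_ [l_sum1 _]]].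
by move: l_sum1; rewrite big_ord0 => /eqP; rewrite eq_sym oner_eq0.
Qed.

Lemma full_dim_flat_dot_eq0 (Ap Am : seq 'rV[int]_n) v w d b :
  full_dimensional R Ap Am ->
  (forall b, b \in Am -> relint_conv (map (@ri R n) Ap) (ri R b)) ->
  (forall e, e \in map (@ri R n) Ap -> dot v e ^+ 2 <= dot w e + d) ->
  b \in Am -> dot v (ri R b) ^+ 2 = dot w (ri R b) + d -> v = 0.
Proof.
move=> [S [S_gt0 [S_conv S_rank]]] Am_relint Ap_le bAm b_eq.
have S_aff k : (k < size S)%N -> aff (map (@ri R n) Ap) S`_k.
  move=> kS; apply: conv_sub_aff (S_conv _ (mem_nth 0 kS)) => p.
  rewrite map_cat mem_cat => /orP[pAp|/mapP[b' b'Am ->]]; first exact: mem_aff.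
  by apply: conv_sub_aff (Am_relint _ b'Am).1 => ?; exact: mem_aff.
apply: (dot_rows_eq0 S_rank) => k.
have -> : row k (\matrix_(k < size S, j < n) (S`_k - S`_0) 0 j) = S`_k - S`_0.
  by apply/rowP => j; rewrite !mxE.
exact: relint_sqr_dot_flat Ap_le (Am_relint b bAm) b_eq (S_aff _ (ltn_ord k)) (S_aff _ S_gt0).
Qed.

Lemma nonseparable_sum_sqr_dot_gt0 s c X :
  full_dimensional R (Aplus s c) (Aminus s c) -> nonseparable R (Aplus s c) (Aminus s c) ->
  (forall a, 0 < X a) -> \sum_(a <- s) c a * X a = 0 ->
  (forall i, \sum_(a <- s) c a * X a * ri R a 0 i = 0) ->
  forall v, v != 0 -> 0 < \sum_(a <- s) c a * X a * dot v (ri R a) ^+ 2.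
Proof.
move=> full [Am_relint [D [[_ [g [g_cell D_def]]] Am_D]]] X_gt0 sum0 mom0 v v0.
pose h p := dot v p ^+ 2.
have [w [d [cell_le cell_def]]] := g_cell h.
pose l p := dot w p + d.
have l_le_h a : a \in Aplus s c -> l (ri R a) <= h (ri R a).
  by move=> aAp; apply: cell_le; exact: map_f.
have h_le_l b : b \in Aminus s c -> h (ri R b) <= l (ri R b).
  move=> bAm; have := Am_D b bAm; rewrite D_def => /(_ h); rewrite cell_def.
  by apply: conv_sqr_dot_le => e; rewrite mem_filter => /andP[/eqP-> _].
have gap_ge0 := weighted_gap_ge0 X_gt0 l_le_h h_le_l.
have -> : \sum_(a <- s) c a * X a * dot v (ri R a) ^+ 2 =
          \sum_(a <- s) c a * X a * (h (ri R a) - l (ri R a)).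
  under [RHS]eq_bigr do rewrite mulrBr.
  by rewrite sumrB (sum_dot_affine_eq0 _ _ sum0) ?subr0.
rewrite lt0r big_seq sumr_ge0 // andbT; apply: contra v0 => gap_sum0.
have eq_hl a : a \in s -> c a != 0 -> h (ri R a) = l (ri R a).
  move=> aS ca0; move: gap_sum0; rewrite psumr_eq0 // => /allP/(_ a aS).
  by rewrite aS /= !mulf_eq0 (negbTE ca0) (gt_eqF (X_gt0 a)) subr_eq0 => /eqP.
have [b bAm] := exists_Aminus full X_gt0 sum0.
have [c_lt0 bS] : c b < 0 /\ b \in s by move: bAm; rewrite mem_filter => /andP.
apply/eqP; apply: (full_dim_flat_dot_eq0 full Am_relint _ bAm (eq_hl b bS (ltr0_neq0 c_lt0))).
move=> e /mapP[a]; rewrite mem_filter => /andP[c_gt0 aS] ->.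
by rewrite -/(h _) -/(l _) eq_hl // gt_eqF.
Qed.

End SignedSupport.

Theorem lemma4p3 (R : realType) (n : nat) (s : seq 'rV[int]_n)
    (c : 'rV[int]_n -> R) (xs : 'rV[R]_n) :
  @full_dimensional R n (Aplus s c) (Aminus s c) ->
  @nonseparable R n (Aplus s c) (Aminus s c) ->
  SingPos (laurent s c) xs ->
  0 < \det (Hess (laurent s c) xs).
Proof.
move=> full nonsep [xs_gt0 [f0 euler0]].
have xs0 k : xs 0 k != 0 by rewrite gt_eqF.
have monom_gt0 a : 0 < monom a xs by apply: prodr_gt0 => i _; rewrite exprz_gt0.
have moment0 i : laurent s (fun a => c a * (a 0 i)%:~R) xs = 0.
  by have := euler0 i; rewrite partial_laurent // mulrCA mulfV // mulr1.
pose d := \row_i (xs 0 i)^-1.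
pose M := \sum_(a <- s) (c a * monom a xs) *: ((ri R a)^T *m ri R a).
have -> : Hess (laurent s c) xs = diag_mx d *m M *m diag_mx d.
  apply/matrixP => i j; rewrite Hess_laurent // moment0 mulr0 subr0.
  rewrite mul_mx_diag mul_diag_mx !mxE summxE /laurent !mulr_suml mulr_sumr mulr_suml.
  apply: eq_bigr => a _; rewrite !mxE big_ord1 !mxE; field.
  by rewrite !xs0.
apply/posdefmx_det_gt0/posdefmx_diag_conj => [i|v v0]; first by rewrite mxE invr_eq0.
rewrite quad_sum_outer; apply: nonseparable_sum_sqr_dot_gt0 => // i.
by rewrite -[RHS](moment0 i); apply: eq_bigr => a _; rewrite mxE mulrAC.
Qed.
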